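(* Let $(A_i,\gamma_i)_{i\in I}$, with $I\neq\varnothing$, be a family of non-trivial quasiordered sets, i.e. $\Delta_{A_i}\neq\gamma_i\neq A_i\times A_i$ for all $i\in I$. Then the following are equivalent: (1) $\prod_{i\in I}\gamma_i$ is a half-space on $\prod_{i\in I}A_i$; (2) either $|I|=1$ and the single $\gamma_i$ is a half-space, or $|I|=2$ and both $(A_i,\gamma_i)$ are two-element chains.
   Context: A quasiorder on $A$ is a reflexive and transitive relation; $\Delta_A=\{(a,a)\mid a\in A\}$. A quasiorder $\alpha$ on $A$ is a half-space if there is a quasiorder $\beta$ on $A$ with $\alpha\cup\beta=A\times A$ and $\alpha\cap\beta=\Delta_A$. The direct product quasiorder is $\prod_{i\in I}\gamma_i=\{(\underline a,\underline b)\mid \underline a,\underline b\in\prod_{i\in I}A_i,\ (\underline a(i),\underline b(i))\in\gamma_i\text{ for all } i\in I\}$. A two-element chain is a two-element set with a linear order. *)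

Definition is_quasiorder {A : Type} (R : A -> A -> Prop) : Prop :=
  (forall a, R a a) /\ (forall a b c, R a b -> R b c -> R a c).

Definition is_half_space {A : Type} (alpha : A -> A -> Prop) : Prop :=
  is_quasiorder alpha /\
  exists beta : A -> A -> Prop,
    is_quasiorder beta /\
    (forall a b, alpha a b \/ beta a b) /\
    (forall a b, (alpha a b /\ beta a b) <-> a = b).

Definition prod_rel {I : Type} {A : I -> Type} (gamma : forall i, A i -> A i -> Prop)
  : (forall i, A i) -> (forall i, A i) -> Prop :=
  fun a b => forall i, gamma i (a i) (b i).

Definition nontrivial_rel {A : Type} (R : A -> A -> Prop) : Prop :=
  ~ (forall a b, R a b <-> a = b) /\ ~ (forall a b, R a b).

Definition two_element_chain {A : Type} (R : A -> A -> Prop) : Prop :=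
  (exists x y : A, x <> y /\ forall z, z = x \/ z = y) /\
  (forall a, R a a) /\
  (forall a b c, R a b -> R b c -> R a c) /\
  (forall a b, R a b -> R b a -> a = b) /\
  (forall a b, R a b \/ R b a).

Definition card_one (I : Type) : Prop := exists i : I, forall j, j = i.
Definition card_two (I : Type) : Prop :=
  exists i j : I, i <> j /\ forall k, k = i \/ k = j.

(* A quasiorder is a half-space exactly when its complement together with the
   diagonal is transitive, i.e. when [~ a <= b], [~ b <= c] and [a <= c] force
   [a = c].  In a product this is tested on points differing in few
   coordinates.  If [gamma i] has an incomparable pair [(r, s)] and [j <> i],
   then putting [r] and [s] at [i] shows that every strict pair [u < v] of
   [gamma j] consists of a bottom and a top, so [gamma j] is a two-element
   chain; with a third coordinate carrying a strict pair, the same points make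
   that pair collapse.  Conversely, one factor is the product itself, and two
   two-element chains are checked coordinatewise. *)

From Stdlib Require Import Classical ClassicalEpsilon FunctionalExtensionality ProofIrrelevance.

Definition codiag_transitive {X : Type} (R : X -> X -> Prop) : Prop :=
  forall a b c, ~ R a b -> ~ R b c -> R a c -> a = c.

Lemma half_space_iff {X : Type} (R : X -> X -> Prop) :
  is_half_space R <-> is_quasiorder R /\ codiag_transitive R.
Proof.
  split.
  - intros [Hq [beta [[_ Bt] [Hu Hi]]]]. split; [exact Hq|].
    intros a b c Hab Hbc Hac.
    assert (Bab : beta a b) by (destruct (Hu a b); tauto).
    assert (Bbc : beta b c) by (destruct (Hu b c); tauto).
    apply Hi; split; [exact Hac | eapply Bt; eauto].
  - intros [[Rr Rt] K]. split; [split; assumption|].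
    exists (fun a b => a = b \/ ~ R a b). split; [split|split].
    + intros; left; reflexivity.
    + intros a b c [->|Hab] [<-|Hbc]; auto.
      destruct (classic (R a c)) as [Hac|Hac]; [left; eapply K; eauto | right; exact Hac].
    + intros a b; destruct (classic (R a b)); auto.
    + intros a b; split.
      * intros [Hab [E|Hab']]; [exact E | contradiction].
      * intros ->; split; [apply Rr | left; reflexivity].
Qed.

Lemma codiag_transitive_flip {X : Type} (R : X -> X -> Prop) :
  codiag_transitive R -> codiag_transitive (fun x y => R y x).
Proof. intros K a b c Hab Hbc Hac. symmetry; exact (K c b a Hbc Hab Hac). Qed.

Lemma nontrivial_rel_witnesses {X : Type} (R : X -> X -> Prop) :
  (forall x, R x x) -> nontrivial_rel R ->
  (exists p q, R p q /\ p <> q) /\ (exists r s, ~ R r s).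
Proof.
  intros Rr [Ndiag Nfull]. split.
  - apply NNPP; intro Hno. apply Ndiag. intros p q; split.
    + intro Hpq. apply NNPP; intro Hne. apply Hno; eauto.
    + intros ->; apply Rr.
  - apply NNPP; intro Hno. apply Nfull. intros r s.
    apply NNPP; intro Hrs. apply Hno; eauto.
Qed.

Lemma two_elements_eq {X : Type} :
  (exists x y : X, x <> y /\ forall z, z = x \/ z = y) ->
  forall u v w : X, u <> w -> v <> w -> u = v.
Proof.
  intros [x [y [_ H]]] u v w Huw Hvw.
  destruct (H u), (H v), (H w); subst; congruence.
Qed.

Lemma two_element_chain_not_le {X : Type} (R : X -> X -> Prop) :
  two_element_chain R -> forall x y, ~ R x y -> R y x /\ x <> y.
Proof.
  intros [_ [Rr [_ [_ Rtot]]]] x y Hxy. split.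
  - destruct (Rtot x y); tauto.
  - intros ->; apply Hxy, Rr.
Qed.

Lemma two_element_chain_of_extremal {X : Type} (R : X -> X -> Prop) :
  is_quasiorder R -> nontrivial_rel R ->
  (forall u v w, R u v -> u <> v -> R u w /\ R w v) -> two_element_chain R.
Proof.
  intros [Rr Rt] N Ext.
  destruct (nontrivial_rel_witnesses R Rr N) as [[p [q [Hpq Hne]]] [r [s Hrs]]].
  assert (Antisym : forall x y, R x y -> R y x -> x = y).
  { intros x y Hxy Hyx. apply NNPP; intro E. apply Hrs.
    destruct (Ext x y r Hxy E) as [_ Hry]. destruct (Ext x y s Hxy E) as [Hxs _].
    eauto. }
  assert (Two : forall z, z = p \/ z = q).
  { intro z. destruct (classic (z = p)) as [|Hzp]; [auto|right].
    destruct (Ext p q z Hpq Hne) as [Hpz Hzq].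
    apply Antisym; [exact Hzq|]. apply (Ext p z q Hpz); congruence. }
  split; [exists p, q; auto|]. do 3 (split; [assumption|]).
  intros a b. destruct (Two a), (Two b); subst; auto.
Qed.

Section ProductPoints.

Context {I : Type} {A : I -> Type}.

Definition upd (e : forall k, A k) (i : I) (x : A i) : forall k, A k :=
  fun k => match excluded_middle_informative (i = k) with
           | left H => eq_rect i A x k H
           | right _ => e k
           end.

Lemma upd_same (e : forall k, A k) i x : upd e i x i = x.
Proof.
  unfold upd. destruct (excluded_middle_informative (i = i)) as [H|H].
  - rewrite (proof_irrelevance _ H eq_refl). reflexivity.
  - contradiction.
Qed.

Lemma upd_other (e : forall k, A k) i x k : k <> i -> upd e i x k = e k.
Proof.
  intro Hk. unfold upd. destruct (excluded_middle_informative (i = k)) as [H|H].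
  - subst; contradiction.
  - reflexivity.
Qed.

Lemma upd_eq_other (e : forall k, A k) i (x y : A i) k :
  k <> i -> upd e i x k = upd e i y k.
Proof. intro Hk. rewrite !upd_other by exact Hk. reflexivity. Qed.

End ProductPoints.

Hint Rewrite @upd_same : upd.
Hint Rewrite @upd_other using congruence : upd.

Section ProductRelation.

Context {I : Type} {A : I -> Type} (gamma : forall i, A i -> A i -> Prop).

Lemma prod_rel_quasiorder :
  (forall i, is_quasiorder (gamma i)) -> is_quasiorder (prod_rel gamma).
Proof.
  intros Hq. split.
  - intros a k; apply (proj1 (Hq k)).
  - intros a b c Hab Hbc k; exact (proj2 (Hq k) _ _ _ (Hab k) (Hbc k)).
Qed.

Hypothesis gamma_refl : forall i x, gamma i x x.
Hypothesis prod_codiag : codiag_transitive (prod_rel gamma).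

Lemma prod_codiag_agree (a b c : forall k, A k) i j k :
  ~ gamma i (a i) (b i) -> ~ gamma j (b j) (c j) ->
  (forall m, m <> k -> a m = c m) -> gamma k (a k) (c k) -> a k = c k.
Proof.
  intros Hab Hbc Hoff Hk.
  assert (Eac : a = c).
  { apply (prod_codiag a b c); [intro P; exact (Hab (P i)) | intro P; exact (Hbc (P j))|].
    intro m. destruct (classic (m = k)) as [->|Hm]; [exact Hk|].
    rewrite (Hoff m Hm). apply gamma_refl. }
  rewrite Eac; reflexivity.
Qed.

Lemma prod_codiag_top (e : forall k, A k) i j (r s : A i) (u v w : A j) :
  i <> j -> ~ gamma i r s -> gamma j u v -> u <> v -> gamma j w v.
Proof.
  intros Hij Hrs Huv Hne. apply NNPP; intro Hwv. apply Hne.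
  pose (a := upd (upd e i r) j u). pose (c := upd (upd e i r) j v).
  pose (b := upd (upd e i s) j w).
  assert (Eac : a j = c j).
  { apply (prod_codiag_agree a b c i j j); unfold a, b, c;
      [ | | intros m Hm; apply upd_eq_other, Hm | ]; autorewrite with upd; auto. }
  unfold a, c in Eac. autorewrite with upd in Eac. exact Eac.
Qed.

Lemma prod_no_three_indices (e : forall k, A k) i j k
  (ri si : A i) (rj sj : A j) (p q : A k) :
  i <> j -> i <> k -> j <> k ->
  ~ gamma i ri si -> ~ gamma j rj sj -> gamma k p q -> p <> q -> False.
Proof.
  intros Hij Hik Hjk Hi Hj Hpq Hne. apply Hne.
  pose (a := upd (upd (upd e i ri) j sj) k p).
  pose (c := upd (upd (upd e i ri) j sj) k q).
  pose (b := upd (upd e i si) j rj).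
  assert (Eac : a k = c k).
  { apply (prod_codiag_agree a b c i j k); unfold a, b, c;
      [ | | intros m Hm; apply upd_eq_other, Hm | ]; autorewrite with upd; auto. }
  unfold a, c in Eac. autorewrite with upd in Eac. exact Eac.
Qed.

Lemma codiag_transitive_factor_of_singleton (e : forall k, A k) i :
  (forall j, j = i) -> codiag_transitive (gamma i).
Proof.
  intros Hall x y z Hxy Hyz Hxz.
  assert (E : upd e i x i = upd e i z i).
  { apply (prod_codiag_agree (upd e i x) (upd e i y) (upd e i z) i i i);
      [ | | intros m Hm; contradiction (Hall m) | ]; autorewrite with upd; auto. }
  autorewrite with upd in E. exact E.
Qed.

End ProductRelation.

Lemma prod_codiag_bottom {I : Type} {A : I -> Type} (gamma : forall i, A i -> A i -> Prop)
  (gamma_refl : forall i x, gamma i x x) (prod_codiag : codiag_transitive (prod_rel gamma))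
  (e : forall k, A k) i j (r s : A i) (u v w : A j) :
  i <> j -> ~ gamma i r s -> gamma j u v -> u <> v -> gamma j u w.
Proof.
  intros Hij Hrs Huv Hne.
  exact (prod_codiag_top (fun k x y => gamma k y x) (fun k x => gamma_refl k x)
           (codiag_transitive_flip _ prod_codiag) e i j s r v u w Hij Hrs Huv (not_eq_sym Hne)).
Qed.

Section NontrivialFactors.

Context {I : Type} {A : I -> Type} (gamma : forall i, A i -> A i -> Prop).
Hypothesis gamma_quasiorder : forall i, is_quasiorder (gamma i).
Hypothesis gamma_nontrivial : forall i, nontrivial_rel (gamma i).
Hypothesis prod_codiag : codiag_transitive (prod_rel gamma).
Variable e : forall k, A k.

Let gamma_refl i : forall x, gamma i x x := proj1 (gamma_quasiorder i).
Let gamma_witnesses i := nontrivial_rel_witnesses _ (gamma_refl i) (gamma_nontrivial i).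

Lemma two_element_chain_of_prod_codiag (m n : I) : n <> m -> two_element_chain (gamma m).
Proof.
  intro Hnm. destruct (gamma_witnesses n) as [_ [r [s Hrs]]].
  apply two_element_chain_of_extremal; [apply gamma_quasiorder | apply gamma_nontrivial |].
  intros u v w Huv Hne. split.
  - exact (prod_codiag_bottom gamma gamma_refl prod_codiag e n m r s u v w Hnm Hrs Huv Hne).
  - exact (prod_codiag_top gamma gamma_refl prod_codiag e n m r s u v w Hnm Hrs Huv Hne).
Qed.

Lemma card_two_of_prod_codiag (i j : I) : i <> j -> card_two I.
Proof.
  intro Hij. exists i, j. split; [exact Hij|]. intro k.
  apply NNPP; intro Hk. apply not_or_and in Hk as [Hki Hkj].
  destruct (gamma_witnesses i) as [_ [ri [si Hi]]], (gamma_witnesses j) as [_ [rj [sj Hj]]].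
  destruct (gamma_witnesses k) as [[p [q [Hpq Hne]]] _].
  exact (prod_no_three_indices gamma gamma_refl prod_codiag e i j k ri si rj sj p q
           Hij (not_eq_sym Hki) (not_eq_sym Hkj) Hi Hj Hpq Hne).
Qed.

End NontrivialFactors.

Lemma prod_codiag_of_singleton {I : Type} {A : I -> Type}
  (gamma : forall i, A i -> A i -> Prop) i :
  (forall j, j = i) -> codiag_transitive (gamma i) -> codiag_transitive (prod_rel gamma).
Proof.
  intros Hall K a b c Hab Hbc Hac.
  assert (Rab : ~ gamma i (a i) (b i)).
  { intro G. apply Hab. intro k. pose proof (Hall k); subst k. exact G. }
  assert (Rbc : ~ gamma i (b i) (c i)).
  { intro G. apply Hbc. intro k. pose proof (Hall k); subst k. exact G. }
  pose proof (K _ _ _ Rab Rbc (Hac i)) as Ei.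
  apply functional_extensionality_dep. intro k. pose proof (Hall k); subst k. exact Ei.
Qed.

(* Each coordinate where [a] and [b], resp. [b] and [c], are incomparable
   carries an [a]-value and a [c]-value both different from the [b]-value;
   the two such coordinates are distinct, hence exhaust [I]. *)
Lemma prod_codiag_of_two_chains {I : Type} {A : I -> Type}
  (gamma : forall i, A i -> A i -> Prop) :
  card_two I -> (forall i, two_element_chain (gamma i)) ->
  codiag_transitive (prod_rel gamma).
Proof.
  intros Two Chain a b c Hab Hbc Hac.
  apply not_all_ex_not in Hab as [k Hk].
  apply not_all_ex_not in Hbc as [l Hl].
  destruct (two_element_chain_not_le _ (Chain k) _ _ Hk) as [_ Hbk].
  destruct (two_element_chain_not_le _ (Chain l) _ _ Hl) as [Hcl Hbl].
  assert (Hkl : k <> l).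
  { intros <-. apply Hk. exact (proj1 (proj2 (proj2 (Chain k))) _ _ _ (Hac k) Hcl). }
  assert (Ek : a k = c k).
  { apply (two_elements_eq (proj1 (Chain k)) _ _ (b k)); [congruence|].
    intro E. apply Hk. rewrite <- E. apply Hac. }
  assert (El : a l = c l).
  { apply (two_elements_eq (proj1 (Chain l)) _ _ (b l)); [|congruence].
    intro E. apply Hl. rewrite <- E. apply Hac. }
  apply functional_extensionality_dep. intro m.
  destruct (classic (m = k)) as [->|Hmk]; [exact Ek|].
  assert (Hml : m = l) by exact (two_elements_eq Two m l k Hmk (not_eq_sym Hkl)).
  subst m. exact El.
Qed.

Theorem theorem3p4 (I : Type) (A : I -> Type) (gamma : forall i, A i -> A i -> Prop)
  (HI : inhabited I)
  (Hq : forall i, is_quasiorder (gamma i))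
  (Hnt : forall i, nontrivial_rel (gamma i)) :
  is_half_space (prod_rel gamma) <->
  ((card_one I /\ forall i, is_half_space (gamma i)) \/
   (card_two I /\ forall i, two_element_chain (gamma i))).
Proof.
  assert (Hrefl : forall i x, gamma i x x) by (intro i; apply (Hq i)).
  assert (Hinh : forall k, inhabited (A k)).
  { intro k. destruct (nontrivial_rel_witnesses _ (Hrefl k) (Hnt k)) as [_ [r _]].
    exact (inhabits r). }
  pose (e := fun k => epsilon (Hinh k) (fun _ => True)).
  rewrite half_space_iff. split.
  - intros [_ K].
    destruct (classic (exists i j : I, i <> j)) as [[i [j Hij]]|Hsingle].
    + right. split; [exact (card_two_of_prod_codiag gamma Hq Hnt K e i j Hij)|].
      intro m. destruct (classic (i = m)) as [->|Him].
      * exact (two_element_chain_of_prod_codiag gamma Hq Hnt K e m j (not_eq_sym Hij)).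
      * exact (two_element_chain_of_prod_codiag gamma Hq Hnt K e m i Him).
    + left. destruct HI as [i].
      assert (Hall : forall j, j = i).
      { intro j. apply NNPP; intro Hji. apply Hsingle; eauto. }
      split; [exists i; exact Hall|].
      intro j. rewrite (Hall j). apply half_space_iff. split; [apply Hq|].
      exact (codiag_transitive_factor_of_singleton gamma Hrefl K e i Hall).
  - intro H. split; [exact (prod_rel_quasiorder gamma Hq)|].
    destruct H as [[[i Hall] Hhs] | [Two Chain]].
    + apply (prod_codiag_of_singleton gamma i Hall), (half_space_iff (gamma i)), Hhs.
    + exact (prod_codiag_of_two_chains gamma Two Chain).
Qed.
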